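(* Let $l\subset\mathbb{P}^3$ be a fixed line and let $r_t$, $t\in\Delta$, be an analytic family of lines in $\mathbb{P}^3$, where $\Delta\subset\mathbb{C}$ is a disk around $0$, such that $l$ and $r_t$ are skew for $t\neq 0$ and $l$ and $r_0$ meet at a point $p$. Let $m,n$ be positive integers. If $F\in\mathbb{C}[[t]][X,Y,Z,W]$ is the equation of an analytic family of surfaces $F_t$ such that for every $t\in\Delta\setminus\{0\}$, $F_t$ has multiplicity at least $m$ along $l$ and at least $n$ along $r_t$, then $F_0$ has multiplicity at least $m$ along $l$, at least $n$ along $r_0$, and at least $m+n$ at $p$. *)

From Stdlib Require Import Reals.
Open Scope R_scope.

Definition CC : Type := (R * R)%type.
Definition C0 : CC := (0, 0).
Definition C1 : CC := (1, 0).
Definition Cadd (x y : CC) : CC := (fst x + fst y, snd x + snd y).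
Definition Cmul (x y : CC) : CC :=
  (fst x * fst y - snd x * snd y, fst x * snd y + snd x * fst y).
Fixpoint Cpow (x : CC) (n : nat) : CC :=
  match n with O => C1 | S k => Cmul x (Cpow x k) end.
Definition Cofnat (n : nat) : CC := (INR n, 0).
Definition Cmod (x : CC) : R := sqrt (fst x ^ 2 + snd x ^ 2).
Fixpoint Csum (f : nat -> CC) (n : nat) : CC :=
  match n with O => C0 | S k => Cadd (Csum f k) (f k) end.

Definition analytic_on (rho : R) (f : CC -> CC) : Prop :=
  exists a : nat -> CC, forall t : CC, Cmod t < rho ->
    Un_cv (fun N => fst (Csum (fun k => Cmul (a k) (Cpow t k)) N)) (fst (f t)) /\
    Un_cv (fun N => snd (Csum (fun k => Cmul (a k) (Cpow t k)) N)) (snd (f t)).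

(** * Vectors of CC^4 (homogeneous coordinates X,Y,Z,W of P^3) *)
Record V4 : Type := mkV4 { vX : CC; vY : CC; vZ : CC; vW : CC }.
Definition vzero : V4 := mkV4 C0 C0 C0 C0.
Definition vadd (u v : V4) : V4 :=
  mkV4 (Cadd (vX u) (vX v)) (Cadd (vY u) (vY v)) (Cadd (vZ u) (vZ v)) (Cadd (vW u) (vW v)).
Definition vscale (s : CC) (u : V4) : V4 :=
  mkV4 (Cmul s (vX u)) (Cmul s (vY u)) (Cmul s (vZ u)) (Cmul s (vW u)).

Definition analytic_V4 (rho : R) (a : CC -> V4) : Prop :=
  analytic_on rho (fun t => vX (a t)) /\ analytic_on rho (fun t => vY (a t)) /\
  analytic_on rho (fun t => vZ (a t)) /\ analytic_on rho (fun t => vW (a t)).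

Definition indep2 (u v : V4) : Prop :=
  forall s r : CC, vadd (vscale s u) (vscale r v) = vzero -> s = C0 /\ r = C0.
Definition indep4 (u v w z : V4) : Prop :=
  forall s r q e : CC,
    vadd (vadd (vscale s u) (vscale r v)) (vadd (vscale q w) (vscale e z)) = vzero ->
    s = C0 /\ r = C0 /\ q = C0 /\ e = C0.
Definition span2 (u v x : V4) : Prop :=
  exists s r : CC, x = vadd (vscale s u) (vscale r v).

Definition meet_at (u1 u2 v1 v2 p : V4) : Prop :=
  p <> vzero /\ span2 u1 u2 p /\ span2 v1 v2 p /\
  forall q, span2 u1 u2 q -> span2 v1 v2 q -> exists s : CC, q = vscale s p.

(** * Homogeneous polynomials of degree d in X,Y,Z,W.
    A coefficient function c gives the polynomial
    sum_{i+j+k+l = d} c i j k l X^i Y^j Z^k W^l (other values of c ignored). *)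
Definition coefs : Type := nat -> nat -> nat -> nat -> CC.

Fixpoint ffact (i a : nat) : nat :=
  match a with O => 1%nat | S a' => (ffact i a' * (i - a'))%nat end.

Definition monom (x : V4) (i j k l : nat) : CC :=
  Cmul (Cmul (Cpow (vX x) i) (Cpow (vY x) j)) (Cmul (Cpow (vZ x) k) (Cpow (vW x) l)).

(** value at x of the partial derivative d^a/dX^a d^b/dY^b d^e/dZ^e d^f/dW^f *)
Definition hderiv (d : nat) (c : coefs) (a b e f : nat) (x : V4) : CC :=
  Csum (fun i => Csum (fun j => Csum (fun k => Csum (fun l =>
    if Nat.eqb (i + j + k + l) d then
      Cmul (c i j k l)
        (Cmul (Cofnat (ffact i a * ffact j b * ffact k e * ffact l f))
              (monom x (i - a) (j - b) (k - e) (l - f)))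
    else C0) (S d)) (S d)) (S d)) (S d).

Definition is_nonzero_poly (d : nat) (c : coefs) : Prop :=
  exists i j k l : nat, (i + j + k + l = d)%nat /\ c i j k l <> C0.

Definition mult_ge (d : nat) (c : coefs) (m : nat) (x : V4) : Prop :=
  forall a b e f : nat, (a + b + e + f < m)%nat -> hderiv d c a b e f x = C0.

Definition mult_along (d : nat) (c : coefs) (m : nat) (u v : V4) : Prop :=
  forall x, x <> vzero -> span2 u v x -> mult_ge d c m x.

(* Restrict the family to the parameters t_q = rho / (q + 2), which tend to 0
   inside the disk; analytic functions are continuous at 0, so the coefficients of
   F_(t_q) and the lines r_(t_q) converge to those of F_0 and r_0.
   - Multiplicity at least N at a point is a closed condition (the partial
     derivatives are polynomial in the coefficients and the point), which gives the
     multiplicities of F_0 along l and along r_0.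
   - For the point p, restrict F_q to lines through points w_q of l with a fixed
     direction x.  By Cramer's rule there are w_q -> p and tau_q -> 0, tau_q <> 0,
     with w_q + tau_q x on r_q; so the polynomial mu |-> F_q(w_q + mu x) has a root
     of order m at 0 and one of order n at tau_q.  The roots collide in the limit,
     hence F_0(p + mu x) vanishes to order m + n at mu = 0.  This holds for a
     dense set of directions x, hence for all of them by continuity, and a form
     all of whose restrictions to lines through p vanish to order m + n has
     multiplicity at least m + n at p.
   The real analysis (continuity of power series, the sequence t_q) is done with the
   standard reals and Coquelicot; the algebra over the field CC = R^2 in MathComp,
   inside the module Degeneration. *)

From Pilot Require Import Defs.
From Stdlib Require Import Reals Lra Lia Classical.
From Coquelicot Require Import Rbar Lim_seq Series PSeries Hierarchy.
Open Scope R_scope.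

Lemma CC_ext (x y : CC) : fst x = fst y -> snd x = snd y -> x = y.
Proof. destruct x, y; simpl; intros; subst; reflexivity. Qed.

Definition Copp (x : CC) : CC := (- fst x, - snd x).
Definition Cinv (x : CC) : CC :=
  (fst x / (fst x ^ 2 + snd x ^ 2), - snd x / (fst x ^ 2 + snd x ^ 2)).

Lemma Cadd_assoc x y z : Cadd x (Cadd y z) = Cadd (Cadd x y) z.
Proof. apply CC_ext; simpl; ring. Qed.
Lemma Cadd_comm x y : Cadd x y = Cadd y x.
Proof. apply CC_ext; simpl; ring. Qed.
Lemma Cadd_0l x : Cadd C0 x = x.
Proof. apply CC_ext; simpl; ring. Qed.
Lemma Cadd_Nl x : Cadd (Copp x) x = C0.
Proof. apply CC_ext; simpl; ring. Qed.
Lemma Cmul_assoc x y z : Cmul x (Cmul y z) = Cmul (Cmul x y) z.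
Proof. apply CC_ext; simpl; ring. Qed.
Lemma Cmul_comm x y : Cmul x y = Cmul y x.
Proof. apply CC_ext; simpl; ring. Qed.
Lemma Cmul_1l x : Cmul Defs.C1 x = x.
Proof. apply CC_ext; simpl; ring. Qed.
Lemma Cmul_Dl x y z : Cmul (Cadd x y) z = Cadd (Cmul x z) (Cmul y z).
Proof. apply CC_ext; simpl; ring. Qed.
Lemma C1_neq_C0 : Defs.C1 <> C0.
Proof. intros H; injection H; lra. Qed.
Lemma Cinv_l (x : CC) : x <> C0 -> Cmul (Cinv x) x = Defs.C1.
Proof.
  intros Hx. assert (Hn : fst x ^ 2 + snd x ^ 2 <> 0).
  { intros H. apply Hx. destruct x as [x1 x2]; simpl in H.
    assert (x1 = 0) by nra. assert (x2 = 0) by nra. now subst. }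
  apply CC_ext; simpl; field; simpl in Hn; rewrite !Rmult_1_r in Hn; exact Hn.
Qed.
Lemma Cinv_C0 : Cinv C0 = C0.
Proof. apply CC_ext; simpl; unfold Rdiv; ring. Qed.
Lemma Cofnat_S (k : nat) : Cofnat (S k) = Cadd Defs.C1 (Cofnat k).
Proof. unfold Cofnat. apply CC_ext; cbn [fst snd Cadd Defs.C1]; [rewrite S_INR|]; ring. Qed.

Lemma Cmod_real (r : R) : 0 <= r -> Cmod (r, 0) = r.
Proof.
  intros Hr. unfold Cmod; simpl. replace (r * (r * 1) + 0 * (0 * 1)) with (r * r) by ring.
  now apply sqrt_square.
Qed.

Definition Ccv (u : nat -> CC) (l : CC) : Prop :=
  Un_cv (fun k => fst (u k)) (fst l) /\ Un_cv (fun k => snd (u k)) (snd l).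

Lemma Ccv_unique (u : nat -> CC) (l l' : CC) : Ccv u l -> Ccv u l' -> l = l'.
Proof. intros [H1 H2] [H3 H4]. apply CC_ext; eapply UL_sequence; eauto. Qed.

Lemma Ccv_eventually (u v : nat -> CC) (l : CC) (N : nat) :
  (forall k, (N <= k)%nat -> u k = v k) -> Ccv v l -> Ccv u l.
Proof.
  intros He [H1 H2].
  split; intros eps Heps; [destruct (H1 eps Heps) as [N1 HN] | destruct (H2 eps Heps) as [N1 HN]];
    exists (max N N1); intros k Hk; rewrite He by lia; apply HN; lia.
Qed.

Lemma Ccv_neq0 (u : nat -> CC) (l : CC) :
  Ccv u l -> l <> C0 -> exists N, forall k, (N <= k)%nat -> u k <> C0.
Proof.
  intros [H1 H2] Hl.
  assert (Hpos : 0 < Rabs (fst l) \/ 0 < Rabs (snd l)).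
  { destruct (Req_dec (fst l) 0) as [E1|E1]; [destruct (Req_dec (snd l) 0) as [E2|E2]|].
    - exfalso. apply Hl. now apply CC_ext.
    - right. now apply Rabs_pos_lt.
    - left. now apply Rabs_pos_lt. }
  destruct Hpos as [Hpos|Hpos];
    [destruct (H1 _ Hpos) as [N HN] | destruct (H2 _ Hpos) as [N HN]];
    exists N; intros k Hk E; specialize (HN k Hk); rewrite E in HN; unfold R_dist in HN;
    simpl in HN; rewrite Rabs_minus_sym, Rminus_0_r in HN; lra.
Qed.

Lemma Un_cv_bounded (u : nat -> R) (l : R) :
  Un_cv u l -> exists M, forall k, Rabs (u k) <= M.
Proof.
  intros Hu.
  assert (Hc : Cauchy_crit (fun k => Rabs (u k))).
  { apply CV_Cauchy. exists (Rabs l). now apply cv_cvabs. }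
  destruct (cauchy_bound _ Hc) as [M HM].
  exists M. intros k. apply HM. now exists k.
Qed.

Lemma pseries_real_cont (alpha : nat -> R) (h : R -> R) (rho : R) :
  0 < rho ->
  (forall r, 0 <= r < rho -> Un_cv (sum_f_R0 (fun k => alpha k * r ^ k)) (h r)) ->
  forall rs : nat -> R, (forall j, 0 <= rs j < rho) -> Un_cv rs 0 ->
  Un_cv (fun j => h (rs j)) (h 0).
Proof.
  intros Hrho Hser rs Hrs Hcv.
  assert (Hsum : forall r, 0 <= r < rho -> PSeries alpha r = h r).
  { intros r Hr. apply is_pseries_unique, is_pseries_Reals. exact (Hser r Hr). }
  assert (Hrad : Rbar_lt (Rabs 0) (CV_radius alpha)).
  { rewrite Rabs_R0. apply Rbar_lt_le_trans with (Finite (rho / 2)); [simpl; lra|].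
    apply (proj1 (CV_radius_bounded alpha)).
    assert (Hex : ex_pseries alpha (rho / 2)).
    { exists (h (rho / 2)). apply is_pseries_Reals, Hser. lra. }
    apply ex_series_lim_0, is_lim_seq_Reals, Un_cv_bounded in Hex.
    destruct Hex as [M HM]. exists M. intros k.
    specialize (HM k). simpl in HM. unfold scal in HM; simpl in HM.
    unfold mult in HM; simpl in HM. rewrite pow_n_pow in HM. now rewrite Rmult_comm. }
  rewrite <- Hsum by lra.
  apply Un_cv_ext with (fun j => PSeries alpha (rs j)).
  { intros j. apply Hsum, Hrs. }
  apply continuity_seq; [apply PSeries_continuity, Hrad | exact Hcv].
Qed.

Definition tseq (c : R) (k : nat) : CC := (c / (INR k + 2), 0).

Lemma tseq_cv (c : R) : Ccv (tseq c) C0.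
Proof.
  split; simpl.
  - apply is_lim_seq_Reals.
    replace (Finite 0) with (Rbar_mult c (Rbar_inv p_infty)) by (simpl; f_equal; ring).
    apply is_lim_seq_scal_l, is_lim_seq_inv; [|discriminate].
    eapply is_lim_seq_plus; [apply is_lim_seq_INR | apply is_lim_seq_const | reflexivity].
  - intros eps Heps. exists 0%nat. intros. unfold R_dist. rewrite Rminus_diag, Rabs_R0. exact Heps.
Qed.

Lemma tseq_bounds (c : R) (k : nat) : 0 < c -> 0 < fst (tseq c k) < c.
Proof.
  intros Hc. simpl. pose proof (pos_INR k).
  split; [apply Rdiv_lt_0_compat; lra|].
  apply Rmult_lt_reg_r with (INR k + 2); [lra|].
  unfold Rdiv. rewrite Rmult_assoc, Rinv_l by lra. nra.
Qed.

Lemma tseq_neq0 (c : R) (k : nat) : 0 < c -> tseq c k <> C0.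
Proof. intros Hc E. pose proof (tseq_bounds c k Hc). rewrite E in H. simpl in H. lra. Qed.

Lemma tseq_in_disk (c : R) (k : nat) : 0 < c -> Cmod (tseq c k) < c.
Proof.
  intros Hc. pose proof (tseq_bounds c k Hc). unfold tseq in *; simpl in *.
  rewrite Cmod_real; lra.
Qed.

Lemma Csum_real_axis (a : nat -> CC) (r : R) (N : nat) :
  fst (Csum (fun k => Cmul (a k) (Cpow (r, 0) k)) (S N)) = sum_f_R0 (fun k => fst (a k) * r ^ k) N /\
  snd (Csum (fun k => Cmul (a k) (Cpow (r, 0) k)) (S N)) = sum_f_R0 (fun k => snd (a k) * r ^ k) N.
Proof.
  assert (Hpow : forall k, Cpow (r, 0) k = (r ^ k, 0)).
  { induction k; simpl; [reflexivity|]. rewrite IHk. apply CC_ext; simpl; ring. }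
  induction N as [|N [IH1 IH2]].
  - cbn [Csum sum_f_R0]. rewrite Hpow. cbn [fst snd Cadd Cmul C0]. split; ring.
  - change (Csum ?g (S (S N))) with (Cadd (Csum g (S N)) (g (S N))).
    cbn [sum_f_R0]. rewrite Hpow. cbn [fst snd Cadd Cmul]. rewrite IH1, IH2. split; ring.
Qed.

Lemma Un_cv_succ (u : nat -> R) (l : R) : Un_cv u l -> Un_cv (fun N => u (S N)) l.
Proof.
  intros Hu. apply Un_cv_ext with (fun N => u (N + 1)%nat).
  - intros N. now rewrite Nat.add_1_r.
  - now apply CV_shift'.
Qed.

Lemma analytic_cv (rho : R) (f : CC -> CC) :
  0 < rho -> analytic_on rho f -> Ccv (fun j => f (tseq rho j)) (f C0).
Proof.
  intros Hrho [a Ha].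
  assert (Hser : forall r, 0 <= r < rho ->
    Un_cv (sum_f_R0 (fun k => fst (a k) * r ^ k)) (fst (f (r, 0))) /\
    Un_cv (sum_f_R0 (fun k => snd (a k) * r ^ k)) (snd (f (r, 0)))).
  { intros r Hr. destruct (Ha (r, 0)) as [H1 H2]. { rewrite Cmod_real; lra. }
    split.
    - apply Un_cv_ext with (fun N => fst (Csum (fun k => Cmul (a k) (Cpow (r, 0) k)) (S N))).
      + intros N. apply Csum_real_axis.
      + exact (Un_cv_succ _ _ H1).
    - apply Un_cv_ext with (fun N => snd (Csum (fun k => Cmul (a k) (Cpow (r, 0) k)) (S N))).
      + intros N. apply Csum_real_axis.
      + exact (Un_cv_succ _ _ H2). }
  assert (Hrs : forall j, 0 <= fst (tseq rho j) < rho).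
  { intros j. pose proof (tseq_bounds rho j Hrho). lra. }
  destruct (tseq_cv rho) as [Hcv _].
  split.
  - apply (pseries_real_cont (fun k => fst (a k)) (fun r => fst (f (r, 0))) rho); auto.
    intros r Hr. apply Hser, Hr.
  - apply (pseries_real_cont (fun k => snd (a k)) (fun r => snd (f (r, 0))) rho); auto.
    intros r Hr. apply Hser, Hr.
Qed.

From HB Require structures.
From mathcomp Require all_boot all_algebra ring Rstruct.

Module Degeneration.
Import structures all_boot all_algebra ring Rstruct.
Set Implicit Arguments. Unset Strict Implicit. Unset Printing Implicit Defensive.
Import GRing.Theory.
Local Open Scope ring_scope.

HB.instance Definition _ := Choice.on CC.
HB.instance Definition _ := GRing.isZmodule.Build CC Cadd_assoc Cadd_comm Cadd_0l Cadd_Nl.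
Lemma C1_neq0 : Defs.C1 != C0. Proof. exact/eqP/C1_neq_C0. Qed.
HB.instance Definition _ :=
  GRing.Zmodule_isComNzRing.Build CC Cmul_assoc Cmul_comm Cmul_1l Cmul_Dl C1_neq0.
Lemma CmulVl (x : CC) : x != 0 -> Cinv x * x = 1.
Proof. by move/eqP; apply: Cinv_l. Qed.
HB.instance Definition _ := GRing.ComNzRing_isField.Build CC CmulVl Cinv_C0.

Lemma CpowE (x : CC) (k : nat) : Cpow x k = x ^+ k.
Proof. by elim: k => [|k IH] //=; rewrite IH exprS. Qed.
Lemma CofnatE (k : nat) : Cofnat k = k%:R :> CC.
Proof. elim: k => [|k IH]; first exact: CC_ext. by rewrite Cofnat_S IH mulrS. Qed.
Lemma CsumE (f : nat -> CC) (k : nat) : Csum f k = \sum_(i < k) f i.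
Proof. by elim: k => [|k IH] /=; rewrite ?big_ord0 // big_ord_recr /= IH. Qed.

(* Keep simplification from unfolding the field operations into coordinates. *)
Arguments Cadd : simpl never.
Arguments Cmul : simpl never.
Lemma CmulE (x y : CC) : Cmul x y = x * y. Proof. by []. Qed.

Lemma Ccv_const (c : CC) : Ccv (fun _ => c) c.
Proof. by split; apply/is_lim_seq_Reals/is_lim_seq_const. Qed.
Lemma Ccv_add (u v : nat -> CC) (x y : CC) :
  Ccv u x -> Ccv v y -> Ccv (fun k => u k + v k) (x + y).
Proof. by case=> ? ? [? ?]; split; apply: CV_plus. Qed.
Lemma Ccv_mul (u v : nat -> CC) (x y : CC) :
  Ccv u x -> Ccv v y -> Ccv (fun k => u k * v k) (x * y).
Proof.
  case=> ? ? [? ?]; split; rewrite /GRing.mul /=.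
  - by apply: CV_minus; apply: CV_mult.
  - by apply: CV_plus; apply: CV_mult.
Qed.
Lemma Ccv_opp (u : nat -> CC) (x : CC) : Ccv u x -> Ccv (fun k => - u k) (- x).
Proof. by case=> ? ?; split; apply: CV_opp. Qed.
Lemma Ccv_exp (u : nat -> CC) (x : CC) (e : nat) :
  Ccv u x -> Ccv (fun k => u k ^+ e) (x ^+ e).
Proof.
  move=> Hu; elim: e => [|e IH]; first exact: Ccv_const.
  apply: (Ccv_eventually _ (fun k => u k * u k ^+ e) _ 0) => [k _|].
    by rewrite exprS.
  by rewrite exprS; apply: Ccv_mul.
Qed.
Lemma Ccv_natmul (u : nat -> CC) (x : CC) (e : nat) :
  Ccv u x -> Ccv (fun k => u k *+ e) (x *+ e).
Proof.
  move=> Hu; elim: e => [|e IH]; first exact: Ccv_const.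
  apply: (Ccv_eventually _ (fun k => u k + u k *+ e) _ 0) => [k _|].
    by rewrite mulrS.
  by rewrite mulrS; apply: Ccv_add.
Qed.
Lemma Ccv_sum (K : nat) (u : nat -> 'I_K -> CC) (x : 'I_K -> CC) :
  (forall i, Ccv (fun k => u k i) (x i)) ->
  Ccv (fun k => \sum_(i < K) u k i) (\sum_(i < K) x i).
Proof.
  elim: K u x => [|K IH] u x Hu.
    rewrite big_ord0; apply: (Ccv_eventually _ (fun _ => 0) _ 0); last exact: Ccv_const.
    by move=> k _; rewrite big_ord0.
  apply: (Ccv_eventually _
    (fun k => \sum_(i < K) u k (widen_ord (leqnSn K) i) + u k ord_max) _ 0).
    by move=> k _; rewrite big_ord_recr.
  rewrite big_ord_recr; apply: Ccv_add; [exact: IH | exact: Hu].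
Qed.

Lemma Ccv_eventually0 (u : nat -> CC) (x : CC) (N : nat) :
  Ccv u x -> (forall k, (N <= k)%coq_nat -> u k = 0) -> x = 0.
Proof.
  move=> Hu H0; apply: (Ccv_unique _ _ _ Hu).
  exact: (Ccv_eventually _ _ _ _ H0 (Ccv_const 0)).
Qed.

Lemma V4_ext (u v : V4) :
  vX u = vX v -> vY u = vY v -> vZ u = vZ v -> vW u = vW v -> u = v.
Proof. by case: u => ????; case: v => ???? /= -> -> -> ->. Qed.

Lemma vaddX u v : vX (vadd u v) = vX u + vX v. Proof. by []. Qed.
Lemma vaddY u v : vY (vadd u v) = vY u + vY v. Proof. by []. Qed.
Lemma vaddZ u v : vZ (vadd u v) = vZ u + vZ v. Proof. by []. Qed.
Lemma vaddW u v : vW (vadd u v) = vW u + vW v. Proof. by []. Qed.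
Lemma vscaleX s u : vX (vscale s u) = s * vX u. Proof. by []. Qed.
Lemma vscaleY s u : vY (vscale s u) = s * vY u. Proof. by []. Qed.
Lemma vscaleZ s u : vZ (vscale s u) = s * vZ u. Proof. by []. Qed.
Lemma vscaleW s u : vW (vscale s u) = s * vW u. Proof. by []. Qed.
Lemma vzeroX : vX vzero = 0. Proof. by []. Qed.
Lemma vzeroY : vY vzero = 0. Proof. by []. Qed.
Lemma vzeroZ : vZ vzero = 0. Proof. by []. Qed.
Lemma vzeroW : vW vzero = 0. Proof. by []. Qed.
Definition vE := (vaddX, vaddY, vaddZ, vaddW, vscaleX, vscaleY, vscaleZ, vscaleW,
  vzeroX, vzeroY, vzeroZ, vzeroW).

Ltac vext := apply: V4_ext; rewrite ?vE.

Lemma vscale0 (x : V4) : vscale 0 x = vzero. Proof. by vext; rewrite mul0r. Qed.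
Lemma vadd0 (x : V4) : vadd x vzero = x. Proof. by vext; rewrite addr0. Qed.

Definition Vcv (xs : nat -> V4) (x : V4) : Prop :=
  [/\ Ccv (fun k => vX (xs k)) (vX x), Ccv (fun k => vY (xs k)) (vY x),
      Ccv (fun k => vZ (xs k)) (vZ x) & Ccv (fun k => vW (xs k)) (vW x)].

Lemma Vcv_const (x : V4) : Vcv (fun _ => x) x.
Proof. by split; apply: Ccv_const. Qed.
Lemma Vcv_add (xs ys : nat -> V4) (x y : V4) :
  Vcv xs x -> Vcv ys y -> Vcv (fun k => vadd (xs k) (ys k)) (vadd x y).
Proof. by case=> ????; case=> ????; split; apply: Ccv_add. Qed.
Lemma Vcv_scale (ss : nat -> CC) (xs : nat -> V4) (s : CC) (x : V4) :
  Ccv ss s -> Vcv xs x -> Vcv (fun k => vscale (ss k) (xs k)) (vscale s x).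
Proof. by move=> H; case=> ????; split; apply: Ccv_mul. Qed.

Lemma Vcv_neq0 (xs : nat -> V4) (x : V4) :
  Vcv xs x -> x <> vzero -> exists N, forall k, (N <= k)%coq_nat -> xs k <> vzero.
Proof.
  case=> H1 H2 H3 H4 Hx.
  have coord (f : V4 -> CC) : f vzero = 0 -> Ccv (fun k => f (xs k)) (f x) -> f x != 0 ->
      exists N, forall k, (N <= k)%coq_nat -> xs k <> vzero.
    move=> Hf0 Hf /eqP Hfx; have [N HN] := Ccv_neq0 _ _ Hf Hfx.
    by exists N => k Hk E; apply: (HN k Hk); rewrite E.
  have [E1|] := eqVneq (vX x) 0; last exact: coord.
  have [E2|] := eqVneq (vY x) 0; last exact: coord.
  have [E3|] := eqVneq (vZ x) 0; last exact: coord.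
  have [E4|] := eqVneq (vW x) 0; last exact: coord.
  by case: Hx; vext.
Qed.

Lemma natr_inj (i j : nat) : (i%:R : CC) = j%:R -> i = j.
Proof. by rewrite -!CofnatE => /(f_equal fst) /= /INR_eq. Qed.

Lemma natr_neq0 (k : nat) : (0 < k)%N -> (k%:R : CC) != 0.
Proof. by move=> Hk; apply/eqP => /(natr_inj (j := 0)) E; rewrite E in Hk. Qed.

(* A polynomial function of degree < N vanishing on CC has zero coefficients:
   otherwise it would have the N distinct roots 0, 1, ..., N-1. *)
Lemma poly_fun_eq0 (N : nat) (c : nat -> CC) :
  (forall x : CC, \sum_(i < N) c i * x ^+ i = 0) -> forall i, (i < N)%N -> c i = 0.
Proof.
  move=> Hc i Hi; pose p := \poly_(j < N) c j.
  have Hp : p = 0.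
    apply/eqP; apply: contraT => Hp0.
    have Hroots : all (root p) [seq j%:R | j <- iota 0 N].
      apply/allP => _ /mapP [j _ ->]; rewrite /root horner_poly.
      by apply/eqP; rewrite -[RHS](Hc j%:R); apply: eq_bigr => k _; rewrite mulrC.
    have Huniq : uniq [seq (j%:R : CC) | j <- iota 0 N].
      by rewrite map_inj_uniq ?iota_uniq // => j k; apply: natr_inj.
    have := max_poly_roots Hp0 Hroots Huniq.
    by rewrite size_map size_iota ltnNge size_poly.
  by have := congr1 (fun q : {poly CC} => q`_i) Hp; rewrite coef_poly Hi coef0.
Qed.

Definition sum4 (N : nat) (F : nat -> nat -> nat -> nat -> CC) : CC :=
  \sum_(i < N) \sum_(j < N) \sum_(k < N) \sum_(l < N) F i j k l.

Lemma eq_sum4 (N : nat) (F G : nat -> nat -> nat -> nat -> CC) :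
  (forall i j k l, (i < N)%N -> (j < N)%N -> (k < N)%N -> (l < N)%N -> F i j k l = G i j k l) ->
  sum4 N F = sum4 N G.
Proof.
  move=> H; rewrite /sum4; apply: eq_bigr => i _; apply: eq_bigr => j _;
  apply: eq_bigr => k _; apply: eq_bigr => l _; exact: H.
Qed.

Lemma sum4_eq0 (N : nat) (F : nat -> nat -> nat -> nat -> CC) :
  (forall i j k l, (i < N)%N -> (j < N)%N -> (k < N)%N -> (l < N)%N -> F i j k l = 0) ->
  sum4 N F = 0.
Proof.
  move=> H; rewrite (eq_sum4 (G := fun _ _ _ _ => 0)) // /sum4.
  by rewrite big1 // => i _; rewrite big1 // => j _; rewrite big1 // => k _; rewrite big1.
Qed.

Lemma sum4_pairs (N : nat) (F : nat -> nat -> nat -> nat -> CC) :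
  sum4 N F = \sum_(r : ('I_N * 'I_N) * ('I_N * 'I_N)) F r.1.1 r.1.2 r.2.1 r.2.2.
Proof.
  rewrite /sum4 pair_bigA; under eq_bigr => ? _ do rewrite pair_bigA.
  by rewrite pair_bigA.
Qed.

Lemma exchange_sum4 (N M : nat) (F : nat -> nat -> nat -> nat -> nat -> nat -> nat -> nat -> CC) :
  sum4 N (fun i j k l => sum4 M (F i j k l)) =
  sum4 M (fun a b e f => sum4 N (fun i j k l => F i j k l a b e f)).
Proof.
  rewrite sum4_pairs; under eq_bigr => ? _ do rewrite sum4_pairs.
  by rewrite exchange_big sum4_pairs /=; apply: eq_bigr => r _; rewrite sum4_pairs.
Qed.

Lemma exchange_sum4_sum (N K : nat) (F : nat -> nat -> nat -> nat -> 'I_K -> CC) :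
  sum4 N (fun i j k l => \sum_(q < K) F i j k l q) = \sum_(q < K) sum4 N (fun i j k l => F i j k l q).
Proof. by rewrite sum4_pairs exchange_big /=; apply: eq_bigr => q _; rewrite sum4_pairs. Qed.

Lemma sum4_mulr (N : nat) (F : nat -> nat -> nat -> nat -> CC) (x : CC) :
  sum4 N F * x = sum4 N (fun i j k l => F i j k l * x).
Proof.
  rewrite /sum4 mulr_suml; apply: eq_bigr => i _; rewrite mulr_suml; apply: eq_bigr => j _;
  rewrite mulr_suml; apply: eq_bigr => k _; rewrite mulr_suml; apply: eq_bigr => l _ //.
Qed.

Lemma sum4_mull (N : nat) (F : nat -> nat -> nat -> nat -> CC) (x : CC) :
  x * sum4 N F = sum4 N (fun i j k l => x * F i j k l).
Proof. by rewrite mulrC sum4_mulr; apply: eq_sum4 => *; rewrite mulrC. Qed.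

Lemma Ccv_sum4 (N : nat) (F : nat -> nat -> nat -> nat -> nat -> CC) (L : nat -> nat -> nat -> nat -> CC) :
  (forall i j k l, Ccv (fun q => F q i j k l) (L i j k l)) ->
  Ccv (fun q => sum4 N (F q)) (sum4 N L).
Proof.
  move=> H; rewrite /sum4; apply: Ccv_sum => i; apply: Ccv_sum => j; apply: Ccv_sum => k;
  apply: Ccv_sum => l; exact: H.
Qed.

Definition mon (x : V4) (i j k l : nat) : CC :=
  (vX x ^+ i * vY x ^+ j) * (vZ x ^+ k * vW x ^+ l).

Lemma Ccv_mon (xs : nat -> V4) (x : V4) (i j k l : nat) :
  Vcv xs x -> Ccv (fun q => mon (xs q) i j k l) (mon x i j k l).
Proof. by case=> ????; rewrite /mon; apply: Ccv_mul; apply: Ccv_mul; apply: Ccv_exp. Qed.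

(* A polynomial in four variables with exponents in [0, N) vanishing on CC^4 is
   zero: peel off one variable at a time. *)
Lemma poly4_fun_eq0 (N : nat) (g : nat -> nat -> nat -> nat -> CC) :
  (forall x : V4, sum4 N (fun a b e f => g a b e f * mon x a b e f) = 0) ->
  forall a b e f, (a < N)%N -> (b < N)%N -> (e < N)%N -> (f < N)%N -> g a b e f = 0.
Proof.
  move=> H a b e f Ha Hb He Hf.
  have H1 (x2 x3 x4 : CC) :
      \sum_(b < N) \sum_(e < N) \sum_(f < N) g a b e f * (x2 ^+ b * (x3 ^+ e * x4 ^+ f)) = 0.
    apply: (poly_fun_eq0 (c := fun a => \sum_(b < N) \sum_(e < N) \sum_(f < N)
      g a b e f * (x2 ^+ b * (x3 ^+ e * x4 ^+ f)))) Ha => x1.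
    rewrite -[RHS](H (mkV4 x1 x2 x3 x4)); apply: eq_bigr => a' _.
    rewrite mulr_suml; apply: eq_bigr => b' _; rewrite mulr_suml; apply: eq_bigr => e' _.
    rewrite mulr_suml; apply: eq_bigr => f' _; rewrite /mon /=; ring.
  have H2 (x3 x4 : CC) : \sum_(e < N) \sum_(f < N) g a b e f * (x3 ^+ e * x4 ^+ f) = 0.
    apply: (poly_fun_eq0 (c := fun b => \sum_(e < N) \sum_(f < N)
      g a b e f * (x3 ^+ e * x4 ^+ f))) Hb => x2.
    rewrite -[RHS](H1 x2 x3 x4); apply: eq_bigr => b' _.
    rewrite mulr_suml; apply: eq_bigr => e' _; rewrite mulr_suml; apply: eq_bigr => f' _; ring.
  have H3 (x4 : CC) : \sum_(f < N) g a b e f * x4 ^+ f = 0.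
    apply: (poly_fun_eq0 (c := fun e => \sum_(f < N) g a b e f * x4 ^+ f)) He => x3.
    rewrite -[RHS](H2 x3 x4); apply: eq_bigr => e' _.
    rewrite mulr_suml; apply: eq_bigr => f' _; ring.
  exact: (poly_fun_eq0 (c := fun f => g a b e f)) Hf.
Qed.

(* Taylor coefficients.  taylor_coef d c a b e f w is the coefficient of
   X^a Y^b Z^e W^f in the expansion of F(w + v) in v, where F is the form of
   degree d with coefficients c; the partial derivative of multi-order
   (a, b, e, f) at w is a! b! e! f! times it. *)
Definition taylor_coef (d : nat) (c : coefs) (a b e f : nat) (w : V4) : CC :=
  sum4 d.+1 (fun i j k l => if Nat.eqb (i + j + k + l) d then
    c i j k l * (('C(i, a) * 'C(j, b) * 'C(k, e) * 'C(l, f))%N%:R * mon w (i - a) (j - b) (k - e) (l - f))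
  else 0).

Lemma hderiv_taylor_coef (d : nat) (c : coefs) (a b e f : nat) (x : V4) :
  hderiv d c a b e f x = (a`! * b`! * e`! * f`!)%N%:R * taylor_coef d c a b e f x.
Proof.
  have ffactE i n : ffact i n = ('C(i, n) * n`!)%N.
    by rewrite bin_ffact; elim: n => [|n IH] /=; rewrite ?ffactn0 // IH ffactnSr.
  rewrite /hderiv /taylor_coef sum4_mull /sum4 CsumE; apply: eq_bigr => i _;
  rewrite CsumE; apply: eq_bigr => j _; rewrite CsumE; apply: eq_bigr => k _;
  rewrite CsumE; apply: eq_bigr => l _.
  case: (Nat.eqb _ _); last by rewrite mulr0.
  rewrite CofnatE /monom !CmulE !CpowE !ffactE !natrM /mon; ring.
Qed.

Lemma Ccv_taylor_coef (d : nat) (cs : nat -> coefs) (c : coefs) (ws : nat -> V4) (w : V4) (a b e f : nat) :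
  (forall i j k l, Ccv (fun q => cs q i j k l) (c i j k l)) -> Vcv ws w ->
  Ccv (fun q => taylor_coef d (cs q) a b e f (ws q)) (taylor_coef d c a b e f w).
Proof.
  move=> Hc Hw; apply: Ccv_sum4 => i j k l; case: (Nat.eqb _ _); last exact: Ccv_const.
  by apply: Ccv_mul => //; apply: Ccv_mul; [exact: Ccv_const | exact: Ccv_mon].
Qed.

Lemma binomial_upto (x y : CC) (i N : nat) : (i < N)%N ->
  (x + y) ^+ i = \sum_(a < N) x ^+ (i - a) * y ^+ a *+ 'C(i, a).
Proof.
  move=> Hi; rewrite exprDn (big_ord_widen _ (fun a => x ^+ (i - a) * y ^+ a *+ 'C(i, a)) Hi).
  rewrite big_mkcond; apply: eq_bigr => a _; case: ifP => // /negbT; rewrite -leqNgt => Ha.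
  by rewrite bin_small ?mulr0n.
Qed.

Lemma mon_add (w v : V4) (i j k l N : nat) :
  (i < N)%N -> (j < N)%N -> (k < N)%N -> (l < N)%N ->
  mon (vadd w v) i j k l = sum4 N (fun a b e f =>
    ('C(i, a) * 'C(j, b) * 'C(k, e) * 'C(l, f))%N%:R * mon w (i - a) (j - b) (k - e) (l - f) * mon v a b e f).
Proof.
  move=> Hi Hj Hk Hl; rewrite /mon !vE (binomial_upto _ _ Hi) (binomial_upto _ _ Hj)
    (binomial_upto _ _ Hk) (binomial_upto _ _ Hl).
  rewrite [X in X * _]big_distrlr [X in _ * X]big_distrlr /= mulr_suml /sum4.
  apply: eq_bigr => a _; rewrite mulr_suml; apply: eq_bigr => b _.
  rewrite mulr_sumr; apply: eq_bigr => e _; rewrite mulr_sumr; apply: eq_bigr => f _.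
  have rearrange (p1 q1 p2 q2 p3 q3 p4 q4 c1 c2 c3 c4 : CC) :
      (p1 * q1 * c1) * (p2 * q2 * c2) * ((p3 * q3 * c3) * (p4 * q4 * c4)) =
      c1 * c2 * c3 * c4 * ((p1 * p2) * (p3 * p4)) * ((q1 * q2) * (q3 * q4)) by ring.
  by rewrite -(mulr_natr _ 'C(i, a)) -(mulr_natr _ 'C(j, b)) -(mulr_natr _ 'C(k, e))
    -(mulr_natr _ 'C(l, f)) !natrM rearrange.
Qed.

Lemma taylor (d : nat) (c : coefs) (w v : V4) :
  hderiv d c 0 0 0 0 (vadd w v) = sum4 d.+1 (fun a b e f => taylor_coef d c a b e f w * mon v a b e f).
Proof.
  rewrite hderiv_taylor_coef mul1r.
  transitivity (sum4 d.+1 (fun i j k l => sum4 d.+1 (fun a b e f =>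
    if Nat.eqb (i + j + k + l) d then c i j k l * (('C(i, a) * 'C(j, b) * 'C(k, e) * 'C(l, f))%N%:R
      * mon w (i - a) (j - b) (k - e) (l - f) * mon v a b e f) else 0))).
    apply: eq_sum4 => i j k l Hi Hj Hk Hl; case: (Nat.eqb _ _); last by rewrite sum4_eq0.
    by rewrite !bin0 !subn0 mul1r (mon_add _ _ Hi Hj Hk Hl) sum4_mull.
  rewrite exchange_sum4; apply: eq_sum4 => a b e f _ _ _ _; rewrite sum4_mulr.
  by apply: eq_sum4 => i j k l _ _ _ _; case: (Nat.eqb _ _); rewrite ?mul0r // !mulrA.
Qed.

Lemma mon_scale (s : CC) (x : V4) (a b e f : nat) :
  mon (vscale s x) a b e f = s ^+ (a + b + e + f) * mon x a b e f.
Proof. by rewrite /mon !vE !exprMn !exprD; ring. Qed.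

(* line_coef d c k w x is the coefficient of mu^k in F(w + mu x): the restriction
   of F to the line through w with direction x. *)
Definition line_coef (d : nat) (c : coefs) (k : nat) (w x : V4) : CC :=
  sum4 d.+1 (fun a b e f =>
    if (a + b + e + f == k)%N then taylor_coef d c a b e f w * mon x a b e f else 0).

Lemma line_expansion (d : nat) (c : coefs) (w x : V4) (mu : CC) :
  hderiv d c 0 0 0 0 (vadd w (vscale mu x)) = \sum_(k < (4 * d).+1) line_coef d c k w x * mu ^+ k.
Proof.
  rewrite taylor.
  transitivity (sum4 d.+1 (fun a b e f => \sum_(k < (4 * d).+1)
     (if (a + b + e + f == k)%N then taylor_coef d c a b e f w * mon x a b e f * mu ^+ k else 0))).
    apply: eq_sum4 => a b e f Ha Hb He Hf.
    have Hk : (a + b + e + f < (4 * d).+1)%N by rewrite ltnS; rewrite !ltnS in Ha Hb He Hf; lia.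
    rewrite -big_mkcond /= (big_pred1 (Ordinal Hk)) /=; last first.
      by move=> k; rewrite /= -(inj_eq val_inj) eq_sym.
    by rewrite mon_scale (mulrC (mu ^+ _)) mulrA.
  rewrite (@exchange_sum4_sum _ _ (fun a b e f (k : 'I_(4 * d).+1) => if (a + b + e + f == k)%N
    then taylor_coef d c a b e f w * mon x a b e f * mu ^+ k else 0)).
  apply: eq_bigr => k _; rewrite /line_coef sum4_mulr.
  by apply: eq_sum4 => a b e f _ _ _ _; case: (_ == _); rewrite ?mul0r.
Qed.

Lemma line_coef_high (d : nat) (c : coefs) (k : nat) (w x : V4) :
  ((4 * d).+1 <= k)%N -> line_coef d c k w x = 0.
Proof.
  move=> Hk; apply: sum4_eq0 => a b e f Ha Hb He Hf; case: eqP => // E.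
  by move: Ha Hb He Hf Hk; rewrite -E !ltnS; lia.
Qed.

Lemma Ccv_line_coef (d : nat) (cs : nat -> coefs) (c : coefs) (k : nat) (ws xs : nat -> V4) (w x : V4) :
  (forall i j k l, Ccv (fun q => cs q i j k l) (c i j k l)) -> Vcv ws w -> Vcv xs x ->
  Ccv (fun q => line_coef d (cs q) k (ws q) (xs q)) (line_coef d c k w x).
Proof.
  move=> Hc Hw Hx; apply: Ccv_sum4 => a b e f; case: (_ == _); last exact: Ccv_const.
  by apply: Ccv_mul; [exact: Ccv_taylor_coef | exact: Ccv_mon].
Qed.

Lemma line_coef_of_mult (d : nat) (c : coefs) (N : nat) (w : V4) :
  mult_ge d c N w -> forall k x, (k < N)%N -> line_coef d c k w x = 0.
Proof.
  move=> Hw k x Hk; apply: sum4_eq0 => a b e f _ _ _ _; case: eqP => [Hsum|] //.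
  have Hlt : (a + b + e + f < N)%coq_nat by apply/ltP; rewrite Hsum.
  have Hfact : ((a`! * b`! * e`! * f`!)%N%:R : CC) != 0.
    by rewrite natr_neq0 // !muln_gt0 !fact_gt0.
  have := Hw a b e f Hlt; rewrite hderiv_taylor_coef => /eqP.
  by rewrite mulf_eq0 (negbTE Hfact) /= => /eqP ->; rewrite mul0r.
Qed.

Lemma taylor_coef_high (d : nat) (c : coefs) (a b e f : nat) (w : V4) :
  [|| (d < a)%N, (d < b)%N, (d < e)%N | (d < f)%N] -> taylor_coef d c a b e f w = 0.
Proof.
  move=> H; apply: sum4_eq0 => i j k l Hi Hj Hk Hl; case: (Nat.eqb _ _) => //.
  suff -> : ('C(i, a) * 'C(j, b) * 'C(k, e) * 'C(l, f))%N = 0%N by rewrite mul0r mulr0.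
  rewrite !ltnS in Hi Hj Hk Hl.
  case/or4P: H => H.
  - by rewrite (@bin_small i a) ?mul0n // (leq_ltn_trans Hi H).
  - by rewrite (@bin_small j b) ?muln0 ?mul0n // (leq_ltn_trans Hj H).
  - by rewrite (@bin_small k e) ?muln0 ?mul0n // (leq_ltn_trans Hk H).
  - by rewrite (@bin_small l f) ?muln0 // (leq_ltn_trans Hl H).
Qed.

Lemma mult_of_line_coef (d : nat) (c : coefs) (N : nat) (w : V4) :
  (forall x k, (k < N)%N -> line_coef d c k w x = 0) -> mult_ge d c N w.
Proof.
  move=> Hw a b e f /ltP Hlt; rewrite hderiv_taylor_coef; apply/eqP.
  rewrite mulf_eq0; apply/orP; right; apply/eqP.
  have [Hbig|] := boolP [|| (d < a)%N, (d < b)%N, (d < e)%N | (d < f)%N].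
    exact: taylor_coef_high.
  rewrite !negb_or -!leqNgt => /and4P [Ha Hb He Hf].
  pose g a' b' e' f' :=
    if (a' + b' + e' + f' == a + b + e + f)%N then taylor_coef d c a' b' e' f' w else 0.
  have Hg x : sum4 d.+1 (fun a' b' e' f' => g a' b' e' f' * mon x a' b' e' f') = 0.
    rewrite -(Hw x _ Hlt); apply: eq_sum4 => a' b' e' f' _ _ _ _.
    by rewrite /g; case: (_ == _); rewrite ?mul0r.
  by have := poly4_fun_eq0 Hg Ha Hb He Hf; rewrite /g eqxx.
Qed.

Lemma mult_ge_limit (d : nat) (cs : nat -> coefs) (c : coefs) (N : nat) (xs : nat -> V4) (x : V4) :
  (forall i j k l, Ccv (fun q => cs q i j k l) (c i j k l)) -> Vcv xs x ->
  (exists K, forall q, (K <= q)%coq_nat -> mult_ge d (cs q) N (xs q)) -> mult_ge d c N x.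
Proof.
  move=> Hc Hx [K HK] a b e f Hlt.
  have Hcv : Ccv (fun q => hderiv d (cs q) a b e f (xs q)) (hderiv d c a b e f x).
    rewrite hderiv_taylor_coef.
    apply: (Ccv_eventually _ (fun q => _ * taylor_coef d (cs q) a b e f (xs q)) _ 0).
      by move=> q _; rewrite hderiv_taylor_coef.
    by apply: Ccv_mul; [exact: Ccv_const | exact: Ccv_taylor_coef].
  by apply: (Ccv_eventually0 Hcv (N := K)) => q Hq; apply: HK.
Qed.

(* For a polynomial P(mu) = sum_(k < K) e k mu^k,
   shift_coef e K tau i is the coefficient of nu^i in P(tau + nu); P vanishes to
   order n at tau iff its first n shifted coefficients vanish. *)
Definition shift_coef (e : nat -> CC) (K : nat) (tau : CC) (i : nat) : CC :=
  \sum_(k < K) e k * tau ^+ (k - i) *+ 'C(k, i).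

Lemma shift_expansion (e : nat -> CC) (K : nat) (tau nu : CC) :
  \sum_(k < K) e k * (tau + nu) ^+ k = \sum_(i < K) shift_coef e K tau i * nu ^+ i.
Proof.
  under eq_bigr => k _ do rewrite (binomial_upto tau nu (ltn_ord k)) mulr_sumr.
  rewrite exchange_big /=; apply: eq_bigr => i _; rewrite /shift_coef mulr_suml.
  by apply: eq_bigr => k _; rewrite mulrnAr mulrnAl mulrA.
Qed.

Lemma shift_coef_at0 (e : nat -> CC) (K i : nat) : (i < K)%N -> shift_coef e K 0 i = e i.
Proof.
  move=> Hi; rewrite /shift_coef (bigD1 (Ordinal Hi)) //= subnn expr0 mulr1 binn mulr1n.
  rewrite big1 ?addr0 // => k /eqP Hk.
  have [Hki|Hki|Hki] := ltngtP k i; first by rewrite bin_small ?mulr0n.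
    by rewrite expr0n subn_eq0 leqNgt Hki mulr0 mul0rn.
  by case: Hk; apply: val_inj.
Qed.

Lemma Ccv_shift_coef (K : nat) (es : nat -> nat -> CC) (e : nat -> CC) (taus : nat -> CC) (tau : CC) (i : nat) :
  (forall k, Ccv (fun q => es q k) (e k)) -> Ccv taus tau ->
  Ccv (fun q => shift_coef (es q) K (taus q) i) (shift_coef e K tau i).
Proof.
  move=> He Ht; apply: Ccv_sum => k; apply: Ccv_natmul.
  by apply: Ccv_mul => //; apply: Ccv_exp.
Qed.

(* If P(0) = 0, write P = mu * Q with Q(mu) = sum_k e (k+1) mu^k; the shifted
   coefficients of P at tau are expressed through those of Q. *)
Lemma shift_coef_factor0 (e : nat -> CC) (K : nat) (tau : CC) :
  e 0%N = 0 -> shift_coef e K.+1 tau 0 = tau * shift_coef (fun k => e k.+1) K tau 0.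
Proof.
  move=> H0; rewrite /shift_coef big_ord_recl H0 mul0r mul0rn add0r mulr_sumr.
  by apply: eq_bigr => k _; rewrite lift0 !subn0 !bin0 !mulr1n exprS mulrCA.
Qed.

Lemma shift_coef_factorS (e : nat -> CC) (K : nat) (tau : CC) (i : nat) :
  e 0%N = 0 -> shift_coef e K.+1 tau i.+1 =
  tau * shift_coef (fun k => e k.+1) K tau i.+1 + shift_coef (fun k => e k.+1) K tau i.
Proof.
  move=> H0; rewrite /shift_coef big_ord_recl H0 mul0r mul0rn add0r mulr_sumr -big_split.
  apply: eq_bigr => k _; rewrite lift0 binS subSS mulrnDr; congr (_ + _).
  have [Hik|Hki] := ltnP i k; first by rewrite -(subnSK Hik) exprS mulrnAr mulrCA.
  by rewrite bin_small ?mulr0n ?mulr0 // ltnS.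
Qed.

Lemma shift_coef_extend (e : nat -> CC) (K : nat) (tau : CC) (i : nat) :
  e K = 0 -> shift_coef e K.+1 tau i = shift_coef e K tau i.
Proof. by move=> HK; rewrite /shift_coef big_ord_recr /= HK mul0r mul0rn addr0. Qed.

Lemma eq_shift_coef (e1 e2 : nat -> CC) (K : nat) (tau : CC) (i : nat) :
  e1 =1 e2 -> shift_coef e1 K tau i = shift_coef e2 K tau i.
Proof. by move=> H; apply: eq_bigr => k _; rewrite H. Qed.

(* Dividing by mu^m preserves a root of order n at tau != 0. *)
Lemma divide_root0 (e : nat -> CC) (K n : nat) (tau : CC) : tau != 0 ->
  e 0%N = 0 -> (forall k, (K <= k)%N -> e k = 0) ->
  (forall i, (i < n)%N -> shift_coef e K tau i = 0) ->
  forall i, (i < n)%N -> shift_coef (fun k => e k.+1) K tau i = 0.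
Proof.
  move=> Htau H0 Hsupp Hroot.
  have HrootS j : (j < n)%N -> shift_coef e K.+1 tau j = 0.
    by move=> Hj; rewrite shift_coef_extend ?Hroot ?Hsupp.
  elim=> [|i IH] Hi.
    by have /eqP := HrootS 0%N Hi; rewrite shift_coef_factor0 // mulf_eq0 (negbTE Htau) => /eqP.
  have /eqP := HrootS i.+1 Hi; rewrite shift_coef_factorS // IH 1?ltnW // addr0.
  by rewrite mulf_eq0 (negbTE Htau) => /eqP.
Qed.

Lemma divide_root (m : nat) (e : nat -> CC) (K n : nat) (tau : CC) : tau != 0 ->
  (forall k, (k < m)%N -> e k = 0) -> (forall k, (K <= k)%N -> e k = 0) ->
  (forall i, (i < n)%N -> shift_coef e K tau i = 0) ->
  forall i, (i < n)%N -> shift_coef (fun k => e (k + m)%N) K tau i = 0.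
Proof.
  elim: m e => [|m IH] e Htau Hm Hsupp Hroot i Hi.
    by rewrite -(Hroot i Hi); apply: eq_shift_coef => k; rewrite addn0.
  rewrite (@eq_shift_coef _ (fun k => (fun k' => e k'.+1) (k + m)%N)) => [|k]; last by rewrite addnS.
  apply: (IH (fun k => e k.+1)) => //.
  - by move=> k Hk; apply: (Hm k.+1).
  - by move=> k Hk; apply/Hsupp/leqW.
  - by apply: divide_root0 => //; apply: (Hm 0%N).

Qed.

Lemma root_collision (K m n : nat) (es : nat -> nat -> CC) (e : nat -> CC) (taus : nat -> CC) :
  (forall k, Ccv (fun q => es q k) (e k)) -> Ccv taus 0 ->
  (forall q k, (K <= k)%N -> es q k = 0) ->
  (exists N, forall q, (N <= q)%coq_nat -> [/\ taus q != 0, (forall k, (k < m)%N -> es q k = 0) &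
      (forall i, (i < n)%N -> shift_coef (es q) K (taus q) i = 0)]) ->
  forall k, (k < m + n)%N -> e k = 0.
Proof.
  move=> He Htau Hsupp [N HN] k Hk.
  have [Hkm|Hmk] := ltnP k m.
    by apply: (Ccv_eventually0 (He k) (N := N)) => q /HN [_ Hm _]; apply: Hm.
  have [HkK|HKk] := ltnP k K; last first.
    by apply: (Ccv_eventually0 (He k) (N := 0)) => q _; apply: Hsupp.
  have Hcv := Ccv_shift_coef K (k - m) (fun k' => He (k' + m)%N) Htau.
  rewrite shift_coef_at0 ?subnK // in Hcv; last exact: leq_ltn_trans (leq_subr _ _) HkK.
  apply: (Ccv_eventually0 Hcv (N := N)) => q /HN [Htq Hm Hn].
  by apply: (divide_root Htq Hm (Hsupp q) Hn); rewrite ltn_subLR.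
Qed.

Lemma line_coef_shift (d : nat) (c : coefs) (w x : V4) (tau : CC) (i : nat) :
  (i < (4 * d).+1)%N ->
  shift_coef (fun k => line_coef d c k w x) (4 * d).+1 tau i = line_coef d c i (vadd w (vscale tau x)) x.
Proof.
  move=> Hi; apply/eqP; rewrite -subr_eq0; apply/eqP.
  apply: (poly_fun_eq0 (c := fun j => shift_coef (fun k => line_coef d c k w x) (4 * d).+1 tau j
    - line_coef d c j (vadd w (vscale tau x)) x)) Hi => nu.
  under eq_bigr => j _ do rewrite mulrBl.
  rewrite sumrB -shift_expansion -!line_expansion.
  have -> : vadd w (vscale (tau + nu) x) = vadd (vadd w (vscale tau x)) (vscale nu x).
    by vext; ring.
  exact: subrr.
Qed.

Definition det3 (a1 a2 a3 b1 b2 b3 c1 c2 c3 : CC) : CC :=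
  a1 * (b2 * c3 - b3 * c2) - a2 * (b1 * c3 - b3 * c1) + a3 * (b1 * c2 - b2 * c1).
Definition det4 (u v w z : V4) : CC :=
  vX u * det3 (vY v) (vZ v) (vW v) (vY w) (vZ w) (vW w) (vY z) (vZ z) (vW z)
  - vY u * det3 (vX v) (vZ v) (vW v) (vX w) (vZ w) (vW w) (vX z) (vZ z) (vW z)
  + vZ u * det3 (vX v) (vY v) (vW v) (vX w) (vY w) (vW w) (vX z) (vY z) (vW z)
  - vW u * det3 (vX v) (vY v) (vZ v) (vX w) (vY w) (vZ w) (vX z) (vY z) (vZ z).

Lemma cramer (u v w z x : V4) :
  vscale (det4 u v w z) x =
  vadd (vadd (vscale (det4 x v w z) u) (vscale (det4 u x w z) v))
       (vadd (vscale (det4 u v x z) w) (vscale (det4 u v w x) z)).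
Proof.
  case: u => ????; case: v => ????; case: w => ????; case: z => ????; case: x => ????.
  by rewrite /det4 /det3; vext => /=; ring.
Qed.

Lemma det4_swap12 (u v w z : V4) : det4 v u w z = - det4 u v w z.
Proof. by rewrite /det4 /det3; ring. Qed.

Lemma Ccv_det4 (us vs ws zs : nat -> V4) (u v w z : V4) :
  Vcv us u -> Vcv vs v -> Vcv ws w -> Vcv zs z ->
  Ccv (fun q => det4 (us q) (vs q) (ws q) (zs q)) (det4 u v w z).
Proof.
  case=> ????; case=> ????; case=> ????; case=> ????; rewrite /det4 /det3.
  by repeat first [apply: Ccv_add | apply: Ccv_opp | apply: Ccv_mul | assumption].
Qed.

Lemma vscale_eq0 (s : CC) (x : V4) : s != 0 -> vscale s x = vzero -> x = vzero.
Proof.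
  move=> Hs H; vext; apply/eqP;
    [move: (congr1 vX H) | move: (congr1 vY H) | move: (congr1 vZ H) | move: (congr1 vW H)];
    by rewrite !vE => /eqP; rewrite mulf_eq0 (negbTE Hs).
Qed.

Lemma vadd_eq0 (y z : V4) : vadd y z = vzero -> y = vscale (-1) z.
Proof.
  move=> H; vext; rewrite mulN1r; apply/eqP; rewrite -addr_eq0;
    [move: (congr1 vX H) | move: (congr1 vY H) | move: (congr1 vZ H) | move: (congr1 vW H)];
    by rewrite !vE => ->.
Qed.

Lemma indep2_neq0 (u v : V4) : indep2 u v -> u <> vzero /\ v <> vzero.
Proof.
  move=> H; split => E.
  - have [H1 _] : (1 : CC) = 0 /\ (0 : CC) = 0.
      by apply: H; rewrite E; vext; rewrite !mulr0 !mul0r addr0.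
    by move: (oner_neq0 CC); rewrite H1 eqxx.
  - have [_ H1] : (0 : CC) = 0 /\ (1 : CC) = 0.
      by apply: H; rewrite E; vext; rewrite !mulr0 !mul0r addr0.
    by move: (oner_neq0 CC); rewrite H1 eqxx.
Qed.

Lemma minor_exists (a b : V4) : indep2 a b -> exists e y, det4 e y a b <> 0.
Proof.
  move=> Hab; apply: NNPP => Hn.
  have H0 e y : det4 e y a b = 0 by apply: NNPP => Hd; apply: Hn; exists e, y.
  have H1 e y z : det4 e y z b = 0.
    have := cramer e y a b z; rewrite !H0 !vscale0 => Hz.
    have [-> _] // : det4 e y z b = 0 /\ det4 e y a z = 0.
    by apply: Hab; rewrite [RHS]Hz; vext; rewrite !add0r.
  have [_ Hb0] := indep2_neq0 Hab; apply: Hb0; vext.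
  - by rewrite -[RHS]oppr0 -(H1 (mkV4 0 1 0 0) (mkV4 0 0 1 0) (mkV4 0 0 0 1)) /det4 /det3 /=; ring.
  - by rewrite -[RHS](H1 (mkV4 1 0 0 0) (mkV4 0 0 1 0) (mkV4 0 0 0 1)) /det4 /det3 /=; ring.
  - by rewrite -[RHS]oppr0 -(H1 (mkV4 1 0 0 0) (mkV4 0 1 0 0) (mkV4 0 0 0 1)) /det4 /det3 /=; ring.
  - by rewrite -[RHS](H1 (mkV4 1 0 0 0) (mkV4 0 1 0 0) (mkV4 0 0 1 0)) /det4 /det3 /=; ring.
Qed.

Lemma span_of_det_vanish (z a b : V4) :
  indep2 a b -> (forall e, det4 e z a b = 0) -> span2 a b z.
Proof.
  move=> Hab Hz; have [e [y /eqP Hd]] := minor_exists Hab.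
  have := cramer e y a b z; rewrite (det4_swap12 y z) !Hz oppr0 !vscale0 => Hcr.
  exists (det4 e y z b / det4 e y a b), (det4 e y a z / det4 e y a b).
  move: (congr1 vX Hcr) (congr1 vY Hcr) (congr1 vZ Hcr) (congr1 vW Hcr).
  rewrite !vE => HX HY HZ HW; vext; apply: (mulfI Hd);
    [rewrite HX | rewrite HY | rewrite HZ | rewrite HW]; by field.
Qed.

Lemma meet_det0 (u1 u2 a b p : V4) : meet_at u1 u2 a b p -> det4 u1 u2 a b = 0.
Proof.
  case=> Hp0 [[s [r Hpl]] [[s' [r' Hpr]] _]].
  have E1 : s * det4 u1 u2 a b = 0.
    transitivity (det4 p u2 a b); first by rewrite Hpl /det4 /det3 !vE; ring.
    by rewrite Hpr /det4 /det3 !vE; ring.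
  have E2 : r * det4 u1 u2 a b = 0.
    transitivity (det4 u1 p a b); first by rewrite Hpl /det4 /det3 !vE; ring.
    by rewrite Hpr /det4 /det3 !vE; ring.
  apply/eqP; apply: contraT => HD; case: Hp0; rewrite Hpl.
  move/eqP: E1; rewrite mulf_eq0 (negbTE HD) orbF => /eqP ->.
  move/eqP: E2; rewrite mulf_eq0 (negbTE HD) orbF => /eqP ->.
  by rewrite !vscale0; vext; rewrite addr0.
Qed.

(* Cramer's identity splits det4 u1 u2 a b * x into a part Qv on the line u1u2
   and a part Zv on the line ab. *)
Definition Qv (u1 u2 a b x : V4) : V4 :=
  vadd (vscale (det4 x u2 a b) u1) (vscale (det4 u1 x a b) u2).
Definition Zv (u1 u2 a b x : V4) : V4 :=
  vadd (vscale (det4 u1 u2 x b) a) (vscale (det4 u1 u2 a x) b).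

Lemma cramer_split (u1 u2 a b x : V4) :
  vscale (det4 u1 u2 a b) x = vadd (Qv u1 u2 a b x) (Zv u1 u2 a b x).
Proof. exact: cramer. Qed.

Lemma Qv_lin (u1 u2 a b x e : V4) (s : CC) :
  Qv u1 u2 a b (vadd x (vscale s e)) = vadd (Qv u1 u2 a b x) (vscale s (Qv u1 u2 a b e)).
Proof. by rewrite /Qv /det4 /det3; vext; ring. Qed.

Lemma Vcv_Qv (u1 u2 x : V4) (aq bq : nat -> V4) (a b : V4) : Vcv aq a -> Vcv bq b ->
  Vcv (fun q => Qv u1 u2 (aq q) (bq q) x) (Qv u1 u2 a b x).
Proof.
  move=> Ha Hb; apply: Vcv_add; apply: Vcv_scale; try exact: Vcv_const;
  by apply: Ccv_det4 => //; apply: Vcv_const.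
Qed.

(* If the distinct lines u1u2 and ab meet at p, Qv u1 u2 a b is not identically 0:
   otherwise u1 and u2 would both lie on ab, hence both be multiples of p. *)
Lemma Qv_nonzero (u1 u2 a b p : V4) : indep2 u1 u2 -> indep2 a b -> meet_at u1 u2 a b p ->
  exists e, Qv u1 u2 a b e <> vzero.
Proof.
  move=> Hl Hab [_ [_ [_ Hmeet]]]; apply: NNPP => Hn.
  have H0 e : det4 e u2 a b = 0 /\ det4 u1 e a b = 0.
    by apply: Hl; apply: NNPP => Hd; apply: Hn; exists e.
  have Hu2 : span2 a b u2 by apply: span_of_det_vanish => // e; case: (H0 e).
  have Hu1 : span2 a b u1.
    by apply: span_of_det_vanish => // e; rewrite det4_swap12; case: (H0 e) => _ ->; rewrite oppr0.
  have L1 : span2 u1 u2 u1 by exists 1, 0; vext; rewrite mul1r mul0r addr0.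
  have L2 : span2 u1 u2 u2 by exists 0, 1; vext; rewrite mul1r mul0r add0r.
  have [s Hs] := Hmeet u1 L1 Hu1; have [s' Hs'] := Hmeet u2 L2 Hu2.
  have [Es' Es] : s' = 0 /\ - s = 0 by apply: Hl; rewrite Hs Hs'; vext; ring.
  have [Hu10 _] := indep2_neq0 Hl; apply: Hu10.
  by rewrite Hs -[s]opprK Es oppr0 vscale0.
Qed.

Section SequentialDegeneration.

Variables (d m n : nat) (cs : nat -> coefs) (c0 : coefs).
Variables (u1 u2 : V4) (aq bq : nat -> V4) (a0 b0 p : V4).
Hypothesis Hcs : forall i j k l, Ccv (fun q => cs q i j k l) (c0 i j k l).
Hypothesis Haq : Vcv aq a0.
Hypothesis Hbq : Vcv bq b0.
Hypothesis Hl : indep2 u1 u2.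
Hypothesis Hab0 : indep2 a0 b0.
Hypothesis Hskew : forall q, indep4 u1 u2 (aq q) (bq q).
Hypothesis Hp : meet_at u1 u2 a0 b0 p.
Hypothesis Hmult_l : forall q, mult_along d (cs q) m u1 u2.
Hypothesis Hmult_r : forall q, mult_along d (cs q) n (aq q) (bq q).

Lemma limit_mult_l : mult_along d c0 m u1 u2.
Proof.
  move=> x Hx Hsp; apply: (mult_ge_limit Hcs (Vcv_const x)).
  by exists 0%N => q _; apply: Hmult_l.
Qed.

(* A point s a0 + r b0 of r_0 is the limit of the points s a_q + r b_q of r_q. *)
Lemma limit_mult_r : mult_along d c0 n a0 b0.
Proof.
  move=> x Hx [s [r Hxr]].
  have Vx : Vcv (fun q => vadd (vscale s (aq q)) (vscale r (bq q))) x.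
    by rewrite Hxr; apply: Vcv_add; apply: Vcv_scale => //; apply: Ccv_const.
  apply: (mult_ge_limit Hcs Vx); have [N HN] := Vcv_neq0 Vx Hx.
  by exists N => q Hq; apply: Hmult_r; [apply: HN | exists s, r].
Qed.

Lemma approach_points (x : V4) : Qv u1 u2 a0 b0 x <> vzero ->
  exists (ws : nat -> V4) (taus : nat -> CC),
    [/\ Vcv ws p, Ccv taus 0, forall q, span2 u1 u2 (ws q),
        forall q, span2 (aq q) (bq q) (vadd (ws q) (vscale (taus q) x)) &
        forall q, taus q = 0 -> ws q = vzero].
Proof.
  move=> HQ; set Q0 := Qv u1 u2 a0 b0 x.
  have HD0 := meet_det0 Hp.
  have HQZ : vadd Q0 (Zv u1 u2 a0 b0 x) = vzero by rewrite -cramer_split HD0 vscale0.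
  have Hspan0 : span2 a0 b0 Q0.
    exists (- det4 u1 u2 x b0), (- det4 u1 u2 a0 x).
    by rewrite (vadd_eq0 HQZ) /Zv; vext; ring.
  have Hspanl : span2 u1 u2 Q0 by exists (det4 x u2 a0 b0), (det4 u1 x a0 b0).
  have [c Hc] : exists c, Q0 = vscale c p by case: Hp => _ [_ [_ Hmeet]]; exact: Hmeet.
  have Hc0 : c != 0 by apply/eqP => E; apply: HQ; rewrite -/Q0 Hc E vscale0.
  exists (fun q => vscale c^-1 (Qv u1 u2 (aq q) (bq q) x)),
    (fun q => - (c^-1 * det4 u1 u2 (aq q) (bq q))); split.
  - have -> : p = vscale c^-1 Q0 by rewrite Hc; vext; rewrite mulrA mulVf ?mul1r.
    by apply: Vcv_scale; [apply: Ccv_const | apply: Vcv_Qv].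
  - rewrite -oppr0 -(mulr0 c^-1) -HD0; apply: Ccv_opp; apply: Ccv_mul; first exact: Ccv_const.
    by apply: Ccv_det4 => //; apply: Vcv_const.
  - move=> q; exists (c^-1 * det4 x u2 (aq q) (bq q)), (c^-1 * det4 u1 x (aq q) (bq q)).
    by rewrite /Qv; vext; ring.
  - move=> q; exists (- c^-1 * det4 u1 u2 x (bq q)), (- c^-1 * det4 u1 u2 (aq q) x).
    have HC := cramer_split u1 u2 (aq q) (bq q) x.
    move: (congr1 vX HC) (congr1 vY HC) (congr1 vZ HC) (congr1 vW HC).
    rewrite !vE => HX HY HZ HW; rewrite /Qv /Zv in HX HY HZ HW *.
    by vext; rewrite !mulNr -!mulrA ?HX ?HY ?HZ ?HW; ring.
  - move=> q /eqP; rewrite oppr_eq0 mulf_eq0 invr_eq0 (negbTE Hc0) /= => /eqP HD.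
    have HC := cramer_split u1 u2 (aq q) (bq q) x; rewrite HD vscale0 in HC.
    rewrite /Qv in HC *; have [-> [-> _]] := Hskew (esym HC).
    by rewrite !vscale0; vext; rewrite addr0 mulr0.
Qed.

(* Along a direction x with Qv x != 0, F_0 vanishes to order m + n at p: the
   restriction of F_q to the line w_q + mu x has a root of order m at mu = 0 and
   one of order n at mu = tau_q, and these roots collide in the limit. *)
Lemma good_direction (x : V4) : Qv u1 u2 a0 b0 x <> vzero ->
  forall k, (k < m + n)%N -> line_coef d c0 k p x = 0.
Proof.
  move=> HQ; have [ws [taus [Vw Ctau Hws Hwt Htau0]]] := approach_points HQ.
  have Hp0 : p <> vzero by case: Hp.
  have Vwt : Vcv (fun q => vadd (ws q) (vscale (taus q) x)) p.
    rewrite -[p]vadd0 -(vscale0 x).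
    by apply: Vcv_add => //; apply: Vcv_scale => //; apply: Vcv_const.
  have [N1 HN1] := Vcv_neq0 Vw Hp0; have [N2 HN2] := Vcv_neq0 Vwt Hp0.
  apply: (@root_collision (4 * d).+1 m n (fun q k => line_coef d (cs q) k (ws q) x)
    (fun k => line_coef d c0 k p x) taus).
  - by move=> k; apply: Ccv_line_coef => //; apply: Vcv_const.
  - exact: Ctau.
  - by move=> q k; apply: line_coef_high.
  exists (maxn N1 N2) => q /leP; rewrite geq_max => /andP [/leP Hq1 /leP Hq2]; split.
  - by apply/eqP => /Htau0; apply: HN1.
  - move=> k Hk; apply: line_coef_of_mult Hk.
    by apply: Hmult_l; [apply: HN1 | apply: Hws].
  - move=> i Hi; have [HiK|HKi] := ltnP i (4 * d).+1.
      rewrite line_coef_shift //; apply: line_coef_of_mult Hi.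
      by apply: Hmult_r; [apply: HN2 | apply: Hwt].
    rewrite /shift_coef big1 // => k _.
    by rewrite bin_small ?mulr0n //; apply: leq_trans (ltn_ord k) HKi.
Qed.

(* Every direction is a limit of good ones, x + t_q e with Qv e != 0, so by
   continuity all line coefficients of F_0 at p of order < m + n vanish. *)
Lemma limit_mult_p : mult_ge d c0 (m + n) p.
Proof.
  apply: mult_of_line_coef => x k Hk.
  have [e He] := Qv_nonzero Hl Hab0 Hp.
  have [HQx|HQx] := classic (Qv u1 u2 a0 b0 x = vzero); last exact: good_direction.
  pose xs q := vadd x (vscale (tseq 1 q) e).
  have Vx : Vcv xs x.
    rewrite -[x in Vcv _ x]vadd0 -(vscale0 e).
    by apply: Vcv_add; [apply: Vcv_const | apply: Vcv_scale (tseq_cv 1) (Vcv_const e)].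
  have Hc0 i j k' l : Ccv (fun _ : nat => c0 i j k' l) (c0 i j k' l) by apply: Ccv_const.
  apply: (Ccv_eventually0 (Ccv_line_coef d k Hc0 (Vcv_const p) Vx) (N := 0)).
  move=> q _; apply: good_direction Hk; rewrite /xs Qv_lin HQx => E; apply: He.
  apply: (@vscale_eq0 (tseq 1 q)); first exact/eqP/tseq_neq0/Rlt_0_1.
  by rewrite -E; vext; rewrite add0r.
Qed.

End SequentialDegeneration.

Lemma Vcv_analytic (rho : R) (a : CC -> V4) : Rlt 0 rho -> analytic_V4 rho a ->
  Vcv (fun q => a (tseq rho q)) (a C0).
Proof.
  move=> Hrho [HX [HY [HZ HW]]]; split; [exact: analytic_cv _ _ Hrho HX | exact: analytic_cv _ _ Hrho HY
  | exact: analytic_cv _ _ Hrho HZ | exact: analytic_cv _ _ Hrho HW].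
Qed.

End Degeneration.

Theorem lemma4p1
  (rho : R) (Hrho : 0 < rho)
  (u1 u2 : V4) (Hl : indep2 u1 u2)
  (a b : CC -> V4) (Ha : analytic_V4 rho a) (Hb : analytic_V4 rho b)
  (Hr : forall t, Cmod t < rho -> indep2 (a t) (b t))
  (Hskew : forall t, Cmod t < rho -> t <> C0 -> indep4 u1 u2 (a t) (b t))
  (p : V4) (Hp : meet_at u1 u2 (a C0) (b C0) p)
  (m n : nat) (Hm : (0 < m)%nat) (Hn : (0 < n)%nat)
  (d : nat) (F : nat -> nat -> nat -> nat -> CC -> CC)
  (HFan : forall i j k l, analytic_on rho (F i j k l))
  (HFsurf : forall t, Cmod t < rho -> is_nonzero_poly d (fun i j k l => F i j k l t))
  (HFmult : forall t, Cmod t < rho -> t <> C0 ->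
      mult_along d (fun i j k l => F i j k l t) m u1 u2 /\
      mult_along d (fun i j k l => F i j k l t) n (a t) (b t)) :
  mult_along d (fun i j k l => F i j k l C0) m u1 u2 /\
  mult_along d (fun i j k l => F i j k l C0) n (a C0) (b C0) /\
  mult_ge d (fun i j k l => F i j k l C0) (m + n) p.
Proof.
  pose (t := tseq rho).
  assert (Ht : forall q, Cmod (t q) < rho /\ t q <> C0).
  { intros q. split; [apply tseq_in_disk | apply tseq_neq0]; exact Hrho. }
  assert (Hcs : forall i j k l, Ccv (fun q => F i j k l (t q)) (F i j k l C0)).
  { intros i j k l. apply analytic_cv; auto. }
  pose proof (Degeneration.Vcv_analytic Hrho Ha) as Haq.
  pose proof (Degeneration.Vcv_analytic Hrho Hb) as Hbq.
  assert (Hab0 : indep2 (a C0) (b C0)).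
  { apply Hr. unfold C0. rewrite Cmod_real; lra. }
  assert (Hmult_l : forall q, mult_along d (fun i j k l => F i j k l (t q)) m u1 u2).
  { intros q. apply (HFmult (t q)); apply Ht. }
  assert (Hmult_r : forall q, mult_along d (fun i j k l => F i j k l (t q)) n (a (t q)) (b (t q))).
  { intros q. apply (HFmult (t q)); apply Ht. }
  assert (Hskew_q : forall q, indep4 u1 u2 (a (t q)) (b (t q))).
  { intros q. apply Hskew; apply Ht. }
  split; [|split].
  - exact (Degeneration.limit_mult_l Hcs Hmult_l).
  - exact (Degeneration.limit_mult_r Hcs Haq Hbq Hmult_r).
  - exact (Degeneration.limit_mult_p Hcs Haq Hbq Hl Hab0 Hskew_q Hp Hmult_l Hmult_r).
Qed.
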